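(* Let $n\in\mathbb N$ and let $\rho:\mathbb H^n\to\mathbb R$ be a $C^2$-function (in the real coordinates) for which there is a constant $\epsilon_0>0$ such that $$\sum_{l,m=1}^{4n}\frac{\partial^2\rho(z)}{\partial x_l\,\partial x_m}\,t_lt_m\ \ge\ \epsilon_0|t|^2\qquad\text{for all } z\in\mathbb H^n,\ t\in\mathbb R^{4n},$$ and let $U:=\{z\in\mathbb H^n:\rho(z)<0\}$. Define $v_\rho:\mathbb H^n\to\mathbb H^n$ by $v_\rho(z):=(\,{}^1v(z),\dots,{}^nv(z))$ with ${}^lv(z):=\sum_{m=1}^4\frac{\partial\rho(z)}{\partial x_{4(l-1)+m}}\,S_m$. Then $v_\rho$ is a quaternion boundary distinguishing map for $U$: it is a $C^1$ map and $$\langle v_\rho(\zeta);\zeta-z\rangle\neq 0\qquad\text{for all }\zeta\in\partial U,\ z\in U .$$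
   Context: $\mathbb H$ denotes the quaternions with real basis $S_1=e$ (the unit), $S_2=i$, $S_3=j$, $S_4=k$, $i^2=j^2=k^2=-e$, $ij=-ji=k$; for $a=a_1e+a_2i+a_3j+a_4k$ its conjugate is $\tilde a=a_1e-a_2i-a_3j-a_4k$. A point $z\in\mathbb H^n$ is written $z=({}^1z,\dots,{}^nz)$ with ${}^lz=\sum_{m=1}^4 x_{4(l-1)+m}S_m$, $x_r\in\mathbb R$, and $|t|$ is the Euclidean norm on $\mathbb R^{4n}$. The scalar product is $\langle\zeta;z\rangle:=\sum_{l=1}^n {}^l\tilde\zeta\,{}^lz\in\mathbb H$. (In the paper's notation, ${}^lv=\sum_m (\partial\rho/\partial\,{}^lz).S_m\,S_m$, where $(\partial\rho/\partial\,{}^lz).S_m$ is the derivative of $\rho$ in the direction $S_m$ of the $l$-th quaternion coordinate.) A quaternion boundary distinguishing map for a bounded open set $U\subset\mathbb H^n$ is a quaternion-valued $C^1$ map $\psi(\zeta,z)$ defined on $V\times U$, $V$ a neighbourhood of $\partial U$, with $\langle\psi(\zeta,z);\zeta-z\rangle\neq0$ for all $(\zeta,z)\in\partial U\times U$; here $\psi(\zeta,z)=v_\rho(\zeta)$. *)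

From HB Require Import structures.
From mathcomp Require Import all_boot all_order all_algebra.
From mathcomp Require Import all_classical all_reals all_analysis.
Set Implicit Arguments. Unset Strict Implicit. Unset Printing Implicit Defensive.
Import Order.TTheory GRing.Theory Num.Theory.
Import numFieldNormedType.Exports.
Local Open Scope classical_set_scope.
Local Open Scope ring_scope.

Record quat (R : realType) := Quat { q1 : R; q2 : R; q3 : R; q4 : R }.

Section Quat.
Variable R : realType.
Definition qzero : quat R := Quat 0 0 0 0.
Definition qadd (a b : quat R) : quat R :=
  Quat (q1 a + q1 b) (q2 a + q2 b) (q3 a + q3 b) (q4 a + q4 b).
(* Hamilton product, i^2=j^2=k^2=-e, ij=-ji=k (hence jk=i, ki=j) *)
Definition qmul (a b : quat R) : quat R :=
  Quat (q1 a * q1 b - q2 a * q2 b - q3 a * q3 b - q4 a * q4 b)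
       (q1 a * q2 b + q2 a * q1 b + q3 a * q4 b - q4 a * q3 b)
       (q1 a * q3 b - q2 a * q4 b + q3 a * q1 b + q4 a * q2 b)
       (q1 a * q4 b + q2 a * q3 b - q3 a * q2 b + q4 a * q1 b).
Definition qconj (a : quat R) : quat R := Quat (q1 a) (- q2 a) (- q3 a) (- q4 a).
End Quat.

(* real coordinate index of  x_{4(l-1)+m}  (1-based) = l*4+m (0-based) *)
Lemma qidx_proof (n : nat) (l : 'I_n) (m : 'I_4) : (l * 4 + m < n * 4)%N.
Proof.
have hl := ltn_ord l; have hm := ltn_ord m.
move: (nat_of_ord l) (nat_of_ord m) hl hm => a b ha hb.
have : (a.+1 * 4 <= n * 4)%N by rewrite leq_mul2r ha orbT.
by rewrite mulSn; move=> h; apply: leq_trans h; rewrite addnC ltn_add2r.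
Qed.
Definition qidx (n : nat) (l : 'I_n) (m : 'I_4) : 'I_(n * 4) :=
  Ordinal (qidx_proof l m).

Definition i4_0 : 'I_4 := @Ordinal 4 0 isT.
Definition i4_1 : 'I_4 := @Ordinal 4 1 isT.
Definition i4_2 : 'I_4 := @Ordinal 4 2 isT.
Definition i4_3 : 'I_4 := @Ordinal 4 3 isT.

Definition qcoord (R : realType) (n : nat) (z : 'rV[R]_(n * 4)) (l : 'I_n) : quat R :=
  Quat (z 0 (qidx l i4_0)) (z 0 (qidx l i4_1)) (z 0 (qidx l i4_2)) (z 0 (qidx l i4_3)).

Definition qscal (R : realType) (n : nat) (zeta z : 'rV[R]_(n * 4)) : quat R :=
  \big[@qadd R/qzero R]_(l < n) qmul (qconj (qcoord zeta l)) (qcoord z l).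

Definition ecoord (R : realType) (N : nat) (k : 'I_N) : 'rV[R]_N := delta_mx 0 k.

Definition pderiv (R : realType) (N : nat) (k : 'I_N) (f : 'rV[R]_N -> R)
  : 'rV[R]_N -> R := fun z => 'D_(@ecoord R N k) f z.

Definition C1 (R : realType) (N : nat) (f : 'rV[R]_N -> R) : Prop :=
  continuous f /\
  forall k : 'I_N, (forall z, derivable f z (@ecoord R N k)) /\ continuous (pderiv k f).

Definition C2 (R : realType) (N : nat) (f : 'rV[R]_N -> R) : Prop :=
  C1 f /\ forall k : 'I_N, C1 (pderiv k f).

Definition C1map (R : realType) (N M : nat) (F : 'rV[R]_N -> 'rV[R]_M) : Prop :=
  forall k : 'I_M, C1 (fun z => F z 0 k).

Definition boundary (T : topologicalType) (A : set T) : set T :=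
  closure A `\` interior A.

(* v_rho(z) : real components d rho / d x_r, so that
   ^l v = sum_m (d rho / d x_{4(l-1)+m}) S_m *)
Definition vrho (R : realType) (n : nat) (rho : 'rV[R]_(n * 4) -> R)
  : 'rV[R]_(n * 4) -> 'rV[R]_(n * 4) :=
  fun z => \row_(r < n * 4) pderiv r rho z.

(* The real part of <v(zeta); zeta - z> is the Euclidean pairing of the
   gradient of rho at zeta with zeta - z.  A C^2 function with positive
   semidefinite Hessian lies above its tangent planes, so
   grad rho(zeta) . (z - zeta) <= rho z - rho zeta < 0, because rho z < 0 while
   rho zeta >= 0 on the boundary of the open set U. *)

From HB Require Import structures.
From mathcomp Require Import all_boot all_order all_algebra.
From mathcomp Require Import all_classical all_reals all_analysis.
From mathcomp Require Import ring zify.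
Import Order.TTheory GRing.Theory Num.Theory.
Import numFieldNormedType.Exports.
Local Open Scope classical_set_scope.
Local Open Scope ring_scope.

Lemma quot_cvg_is_derive {R : numFieldType} {V W : normedModType R}
    (f : V -> W) (p v : V) (l : W) :
  (fun h : R => h^-1 *: (f (h *: v + p) - f p)) @ 0^' --> l ->
  is_derive p v f l.
Proof.
move=> fl; have df : derivable f p v by apply/cvg_ex; exists l.
by apply: DeriveDef => //; apply: cvg_lim.
Qed.

Lemma is_derive_line {R : numFieldType} {V W : normedModType R}
    (f : V -> W) (a v : V) (s : R) (D : W) :
  is_derive (s *: v + a) v f D -> is_derive s 1 (fun t => f (t *: v + a)) D.
Proof.
move=> [dv <-]; apply: quot_cvg_is_derive.
have -> : (fun h : R => h^-1 *: (f ((h *: 1 + s) *: v + a) - f (s *: v + a))) =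
    (fun h : R => h^-1 *: ((f \o shift (s *: v + a)) (h *: v) - f (s *: v + a))).
  by apply: funext => h /=; rewrite [h *: 1]mulr1 scalerDl addrA.
exact: dv.
Qed.

Lemma is_derive1_continuous {R : realType} {phi dphi : R -> R} :
  (forall t : R, is_derive t 1 phi (dphi t)) -> continuous phi.
Proof.
move=> dphi_phi t; apply/differentiable_continuous/derivable1_diffP.
by case: (dphi_phi t).
Qed.

Lemma MVT_origin {R : realType} {phi dphi : R -> R} :
  (forall t : R, is_derive t 1 phi (dphi t)) ->
  forall b, exists2 c, `|c| <= `|b| & phi b - phi 0 = dphi c * b.
Proof.
move=> dphi_phi b.
have phi_cont := is_derive1_continuous dphi_phi.
have [b_ge0|b_lt0] := leP 0 b.
  have [c] := @MVT_segment R phi dphi 0 b b_ge0 (fun x _ => dphi_phi x)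
    (continuous_subspaceT phi_cont).
  rewrite in_itv /= subr0 => /andP[c_ge0 c_le] ->.
  by exists c; rewrite ?ger0_norm.
have [c] := @MVT_segment R phi dphi b 0 (ltW b_lt0) (fun x _ => dphi_phi x)
  (continuous_subspaceT phi_cont).
rewrite in_itv /= sub0r => /andP[c_ge c_le0] E.
exists c; first by rewrite !ler0_norm ?lerN2 // ltW.
by apply/eqP; rewrite -eqr_opp opprB E mulrN.
Qed.

Section PartialDerivatives.
Context {R : realType} {N : nat} {f : 'rV[R]_N -> R}.

(* Mean value theorem along e_k from the moving base point h u + p, then
   continuity of the k-th partial at p. *)
Lemma pderiv_quot_cvg (k : 'I_N) (p u : 'rV[R]_N) (c : R) :
  (forall x, derivable f x (ecoord R k)) -> {for p, continuous (pderiv k f)} ->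
  (fun h : R => h^-1 *: (f ((h * c) *: ecoord R k + (h *: u + p)) - f (h *: u + p)))
    @ 0^' --> c * pderiv k f p.
Proof.
move=> dk /cvgrPdist_le ck; set e := ecoord R k.
apply/cvgrPdist_le => eps eps_gt0.
have c1_gt0 : 0 < `|c| + 1 by rewrite ltr_wpDl.
have /nbhs_normP[d d_gt0 near_p] := ck _ (divr_gt0 eps_gt0 c1_gt0).
pose M := `|c| * `|e| + `|u| + 1.
have M_gt0 : 0 < M by rewrite /M ltr_wpDl // addr_ge0 // mulr_ge0.
near=> h.
have h_neq0 : h != 0 by near: h; exact: nbhs_dnbhs_neq.
have h_small : `|h| < d / M by near: h; apply: dnbhs0_lt; exact: divr_gt0.
set q := h *: u + p.
have line_k (t : R) : is_derive t 1 (fun t => f (t *: e + q)) (pderiv k f (t *: e + q)).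
  by apply: is_derive_line; apply: derivableP; exact: dk.
have [th th_le] := MVT_origin line_k (h * c).
rewrite /= scale0r add0r => ->.
have -> : h^-1 *: (pderiv k f (th *: e + q) * (h * c)) = c * pderiv k f (th *: e + q).
  by rewrite /GRing.scale /=; field.
rewrite -mulrBr normrM.
have th_close : `|pderiv k f p - pderiv k f (th *: e + q)| <= eps / (`|c| + 1).
  apply: near_p; rewrite /ball_ /= /q addrA opprD addrCA subrr addr0 normrN.
  apply: (le_lt_trans (ler_normD _ _)); rewrite !normrZ.
  apply: (@le_lt_trans _ _ (`|h| * M)); last by rewrite -ltr_pdivlMr.
  apply: (@le_trans _ _ (`|h| * (`|c| * `|e| + `|u|))); last first.
    by rewrite ler_wpM2l // lerDl.
  rewrite mulrDr lerD2r mulrA ler_wpM2r //.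
  by move: th_le; rewrite normrM.
apply: (le_trans (ler_wpM2l (normr_ge0 _) th_close)).
by rewrite mulrA ler_pdivrMr // mulrC ler_pM2l // lerDl.
Unshelve. all: by end_near.
Qed.

Lemma is_derive_addr_coord (k : 'I_N) (p u : 'rV[R]_N) (a c : R) :
  is_derive p u f a -> (forall x, derivable f x (ecoord R k)) ->
  {for p, continuous (pderiv k f)} ->
  is_derive p (c *: ecoord R k + u) f (c * pderiv k f p + a).
Proof.
move=> [du <-] dk ck; apply: quot_cvg_is_derive.
have -> : (fun h : R => h^-1 *: (f (h *: (c *: ecoord R k + u) + p) - f p)) =
    (fun h => h^-1 *: (f ((h * c) *: ecoord R k + (h *: u + p)) - f (h *: u + p)))
    + (fun h => h^-1 *: ((f \o shift p) (h *: u) - f p)).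
  apply: funext => h; rewrite fctE /= -scalerDr.
  have -> : h *: (c *: ecoord R k + u) + p = (h * c) *: ecoord R k + (h *: u + p).
    by rewrite scalerDr scalerA addrA.
  by congr (_ *: _); ring.
by apply: cvgD; [exact: pderiv_quot_cvg | exact: du].
Qed.

Lemma C1_is_derive : C1 f ->
  forall p h, is_derive p h f (\sum_(k < N) h 0 k * pderiv k f p).
Proof.
move=> [_ df] p h; rewrite {1}[h]row_sum_delta.
apply: (big_rec2 (fun v a => is_derive p v f a)); first exact: is_derive0.
move=> k v a _ dva; have [dk ck] := df k.
by apply: is_derive_addr_coord => //; exact: ck.
Qed.

End PartialDerivatives.

Definition hessian_form {R : realType} {N : nat} (f : 'rV[R]_N -> R)
    (z t : 'rV[R]_N) : R :=
  \sum_(l < N) \sum_(m < N) pderiv m (pderiv l f) z * t 0 l * t 0 m.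

Lemma C2_tangent_le {R : realType} {N : nat} {f : 'rV[R]_N -> R} :
  C2 f -> (forall z t, 0 <= hessian_form f z t) ->
  forall a h : 'rV[R]_N, \sum_(k < N) h 0 k * pderiv k f a <= f (h + a) - f a.
Proof.
move=> [f_C1 df_C1] hess_ge0 a h.
pose g s := f (s *: h + a).
pose G s := \sum_(k < N) h 0 k * pderiv k f (s *: h + a).
have dg (s : R) : is_derive s 1 g (G s).
  by apply: is_derive_line; exact: C1_is_derive.
have dG (s : R) : is_derive s 1 G (hessian_form f (s *: h + a) h).
  have -> : G = (fun s => (\sum_(l < N) h 0 l \*: pderiv l f) (s *: h + a)).
    by apply: funext => s'; rewrite /G fct_sumE.
  apply: is_derive_line; apply: is_derive_eq.
    by apply: is_derive_sum => l; apply: is_deriveZ; exact: C1_is_derive.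
  apply: eq_bigr => l _ /=; rewrite [_ *: _]big_distrr; apply: eq_bigr => m _ /=.
  by ring.
have G_ndecr x : 0 <= x -> x <= 1 -> G 0 <= G x.
  move=> x_ge0 x_le1; apply: (@ger0_derive1_ndecr R G 0 1) => //.
  - by move=> y _; rewrite derive1E derive_val.
  - exact/continuous_subspaceT/(is_derive1_continuous dG).
have [th] := @MVT_segment R g G 0 1 ler01 (fun x _ => dg x)
  (continuous_subspaceT (is_derive1_continuous dg)).
rewrite in_itv /= /g scale0r scale1r add0r subr0 mulr1 => /andP[th0 th1] ->.
by have := G_ndecr th th0 th1; rewrite /G scale0r add0r.
Qed.

Lemma qidx_inj n : injective (fun lm : 'I_n * 'I_4 => qidx lm.1 lm.2).
Proof.
move=> [l m] [l' m'] /(congr1 val) /= E.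
have [m_lt4 m'_lt4] := (ltn_ord m, ltn_ord m').
by congr pair; apply: val_inj => /=; lia.
Qed.

Lemma sum_qidx {V : nmodType} n (F : 'I_(n * 4) -> V) :
  \sum_(r < n * 4) F r = \sum_(l < n) \sum_(m < 4) F (qidx l m).
Proof.
have qidx_bij : bijective (fun lm : 'I_n * 'I_4 => qidx lm.1 lm.2).
  by apply: inj_card_bij; [exact: qidx_inj | rewrite card_prod !card_ord].
by rewrite (reindex _ (onW_bij _ qidx_bij)) pair_bigA.
Qed.

Lemma sum_ord4 {V : nmodType} (G : 'I_4 -> V) :
  \sum_(m < 4) G m = G i4_0 + G i4_1 + G i4_2 + G i4_3.
Proof.
rewrite !big_ord_recr big_ord0 /= add0r.
by congr (_ + _ + _ + _); congr G; apply: val_inj.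
Qed.

Lemma q1_qscal {R : realType} n (zeta z : 'rV[R]_(n * 4)) :
  q1 (qscal zeta z) = \sum_(r < n * 4) zeta 0 r * z 0 r.
Proof.
rewrite (big_morph (@q1 R) (id1 := 0) (op1 := +%R) (op2 := @qadd R) (id2 := qzero R)
  (fun _ _ => erefl) erefl).
rewrite sum_qidx; apply: eq_bigr => l _; rewrite sum_ord4 /=.
by rewrite !mulNr !opprK.
Qed.

Lemma boundary_sublevel_ge0 {T : topologicalType} {R : realType} {f : T -> R} {x : T} :
  continuous f -> boundary [set z | f z < 0] x -> 0 <= f x.
Proof.
move=> f_cont [_ not_interior]; rewrite leNgt; apply/negP => fx_lt0.
have neg_nbhs : nbhs (f x) [set y : R | y < 0].
  by apply: open_nbhs_nbhs; split; [exact: open_lt | exact: fx_lt0].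
exact/not_interior/(f_cont x _ neg_nbhs).
Qed.

Theorem lemma3p9 (R : realType) (n : nat) (rho : 'rV[R]_(n * 4) -> R)
  (eps0 : R) :
  C2 rho ->
  0 < eps0 ->
  (forall (z t : 'rV[R]_(n * 4)),
      \sum_(l < n * 4) \sum_(m < n * 4)
         pderiv m (pderiv l rho) z * t 0 l * t 0 m
      >= eps0 * \sum_(r < n * 4) t 0 r ^+ 2) ->
  let U := [set z : 'rV[R]_(n * 4) | rho z < 0] in
  C1map (vrho rho) /\
  (forall zeta z, boundary U zeta -> U z ->
     qscal (vrho rho zeta) (zeta - z) <> qzero R).
Proof.
move=> rho_C2 eps0_gt0 hess_ge U; split.
  move=> k; rewrite (_ : (fun z => vrho rho z 0 k) = pderiv k rho).
    exact: rho_C2.2.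
  by apply: funext => z; rewrite mxE.
move=> zeta z zeta_bd Uz scal0.
have rho_zeta_ge0 := boundary_sublevel_ge0 rho_C2.1.1 zeta_bd.
have hess_ge0 w t : 0 <= hessian_form rho w t.
  apply: le_trans (hess_ge w t); rewrite mulr_ge0 ?(ltW eps0_gt0) //.
  by apply: sumr_ge0 => r _; exact: sqr_ge0.
have tangent_lt0 :
    \sum_(k < n * 4) (z - zeta) 0 k * pderiv k rho zeta < 0.
  apply: le_lt_trans (C2_tangent_le rho_C2 hess_ge0 zeta (z - zeta)) _.
  by rewrite subrK subr_lt0 (lt_le_trans Uz rho_zeta_ge0).
have dot_eq : q1 (qscal (vrho rho zeta) (zeta - z)) =
    - \sum_(k < n * 4) (z - zeta) 0 k * pderiv k rho zeta.
  rewrite q1_qscal -sumrN; apply: eq_bigr => k _.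
  by rewrite !mxE mulrC -mulNr opprB.
have := congr1 (@q1 R) scal0; rewrite dot_eq /= => /eqP.
by rewrite oppr_eq0 lt_eqF.
Qed.
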